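(* For every $k\ge1$, $$A_{2k}=\{F_{2k}\}\cup\left\{(n+2)F_{2k}+\left\lfloor\frac{n+1}{\phi}\right\rfloor F_{2k-1}\ :\ n\ge 0\right\},$$ where $\phi=(1+\sqrt5)/2$.
   Context: Fibonacci numbers: $F_1=F_2=1$, $F_{n+1}=F_n+F_{n-1}$ for $n\ge2$. Chung–Graham decomposition: every positive integer $n$ has a unique representation $n=\sum_{i\ge1}c_iF_{2i}$ with $c_i\in\{0,1,2\}$, only finitely many nonzero, such that whenever $c_i=c_j=2$ with $i<j$ there is $k$ with $i<k<j$ and $c_k=0$. Let $\mathcal{CG}(n)$ be the set of $F_{2i}$ with $c_i\neq0$ in this decomposition. For $k\ge1$, $A_{2k}=\{n\ge1:\min\mathcal{CG}(n)=F_{2k}\}$. *)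

From Stdlib Require Import Reals Lia Arith.
Open Scope R_scope.

Fixpoint F (n : nat) : nat :=
  match n with
  | O => O
  | S O => 1%nat
  | S ((S m) as p) => (F p + F m)%nat
  end.

Fixpoint cg_sum (c : nat -> nat) (N : nat) : nat :=
  match N with
  | O => O
  | S M => (cg_sum c M + c (S M) * F (2 * S M))%nat
  end.

(* c (indexed from i = 1; the value c 0 is irrelevant) is a Chung–Graham
   decomposition of n: n = sum_{i>=1} c_i F_{2i}, c_i in {0,1,2},
   finitely many nonzero, and between any two 2's there is a 0. *)
Definition CG_decomp (n : nat) (c : nat -> nat) : Prop :=
  (forall i, (1 <= i)%nat -> (c i <= 2)%nat) /\
  (exists N, (forall i, (N < i)%nat -> c i = O) /\ n = cg_sum c N) /\
  (forall i j, (1 <= i)%nat -> (i < j)%nat -> c i = 2%nat -> c j = 2%nat ->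
     exists k, (i < k < j)%nat /\ c k = O).

(* A_{2k} = { n >= 1 : min CG(n) = F_{2k} }, i.e. in the (unique)
   Chung–Graham decomposition of n the smallest index i >= 1 with c_i <> 0
   is i = k (the F_{2i}, i >= 1, are pairwise distinct). *)
Definition A2k (k n : nat) : Prop :=
  (1 <= n)%nat /\
  exists c, CG_decomp n c /\ c k <> O /\
    (forall i, (1 <= i < k)%nat -> c i = O).

Definition phi : R := (1 + sqrt 5) / 2.

(* floor of a nonnegative real, as a nat (Int_part x = floor x) *)
Definition floor_nat (x : R) : nat := Z.to_nat (Int_part x).

From Stdlib Require Import Reals Arith Lia Lra ZArith.

(* Let c_k, c_{k+1}, ... be the digits of a Chung–Graham decomposition of least index k,
   and write the number as a F_{2k} + b F_{2k-1}. Prepending a digit d maps the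
   coordinates (a, b) to (d + 2a + b, a + b), because F_{2k+2} = 2 F_{2k} + F_{2k-1} and
   F_{2k+1} = F_{2k} + F_{2k-1}; hence a - phi b = sum_j c_{k+j} phi^(-2j).  The
   Chung–Graham condition on the digits keeps this value in [0, phi^2) (in [0, phi) as long
   as a 2 has not yet been followed by a 0), conversely every pair (a, b) with value in that
   range comes from admissible digits, and the leading digit c_k is nonzero exactly when
   the value is at least 1.  So A_{2k} is the set of a F_{2k} + b F_{2k-1} with
   1 <= a - phi b < phi^2, that is, with b = floor ((a - 1) / phi). *)

Open Scope nat_scope.

Definition shift (d : nat -> nat) : nat -> nat := fun j => d (S j).

Fixpoint coordA (d : nat -> nat) (L : nat) : nat :=
  match L with O => O | S L' => d 0 + 2 * coordA (shift d) L' + coordB (shift d) L' end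
with coordB (d : nat -> nat) (L : nat) : nat :=
  match L with O => O | S L' => coordA (shift d) L' + coordB (shift d) L' end.

Fixpoint digit_sum (k : nat) (d : nat -> nat) (L : nat) : nat :=
  match L with O => O | S L' => d 0 * F (2 * k) + digit_sum (S k) (shift d) L' end.

Lemma F_SS n : F (S (S n)) = F (S n) + F n.
Proof. reflexivity. Qed.

Lemma F_pos n : 1 <= F (S n).
Proof.
  enough (H : 1 <= F (S n) /\ 1 <= F (S (S n))) by apply H.
  induction n as [|n [IH1 IH2]]; [simpl; lia|].
  split; [exact IH2|]. rewrite F_SS. lia.
Qed.

Lemma digit_sum_coords L k d : 1 <= k ->
  digit_sum k d L = coordA d L * F (2 * k) + coordB d L * F (2 * k - 1).
Proof.
  revert k d. induction L as [|L IH]; intros k d Hk; [reflexivity|].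
  cbn [digit_sum coordA coordB]. rewrite (IH (S k) (shift d)) by lia.
  destruct k as [|k]; [lia|].
  replace (2 * S (S k) - 1) with (S (S (S (2 * k)))) by lia.
  replace (2 * S (S k)) with (S (S (S (S (2 * k))))) by lia.
  replace (2 * S k - 1) with (S (2 * k)) by lia.
  replace (2 * S k) with (S (S (2 * k))) by lia.
  rewrite !F_SS. ring.
Qed.

Lemma digit_sum_snoc L k d : digit_sum k d (S L) = digit_sum k d L + d L * F (2 * (k + L)).
Proof.
  revert k d. induction L as [|L IH]; intros k d.
  - cbn [digit_sum]. rewrite !Nat.add_0_r. lia.
  - change (digit_sum k d (S (S L))) with (d 0 * F (2 * k) + digit_sum (S k) (shift d) (S L)).
    rewrite IH. cbn [digit_sum]. unfold shift at 2.
    replace (S k + L) with (k + S L) by lia. lia.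
Qed.

Lemma digit_sum_ext L k d d' : (forall j, d j = d' j) -> digit_sum k d L = digit_sum k d' L.
Proof.
  revert k d d'. induction L as [|L IH]; intros k d d' H; [reflexivity|].
  cbn [digit_sum]. rewrite H. f_equal. apply IH. intro j. apply H.
Qed.

Lemma cg_sum_split L k c : 1 <= k ->
  cg_sum c (k - 1 + L) = cg_sum c (k - 1) + digit_sum k (fun j => c (k + j)) L.
Proof.
  intros Hk. induction L as [|L IH].
  - rewrite Nat.add_0_r. cbn [digit_sum]. lia.
  - replace (k - 1 + S L) with (S (k - 1 + L)) by lia.
    cbn [cg_sum]. rewrite IH, digit_sum_snoc.
    replace (S (k - 1 + L)) with (k + L) by lia. lia.
Qed.

Lemma cg_sum_eq0 n c : (forall i, 1 <= i <= n -> c i = 0) -> cg_sum c n = 0.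
Proof.
  induction n as [|n IH]; intros H; [reflexivity|].
  cbn [cg_sum]. rewrite IH by (intros; apply H; lia). rewrite H by lia. lia.
Qed.

(* The flag [pending] records a 2 that has not yet been followed by a 0;
   while it is set, a further 2 is forbidden. *)
Definition cg_next (pending : bool) (a : nat) : bool :=
  match a with O => false | 1 => pending | _ => true end.

Fixpoint cg_valid (pending : bool) (d : nat -> nat) (L : nat) : Prop :=
  match L with
  | O => True
  | S L' => d 0 <= 2 /\ (pending = true -> d 0 <> 2) /\
            cg_valid (cg_next pending (d 0)) (shift d) L'
  end.

Definition twos_separated (d : nat -> nat) (L : nat) : Prop :=
  forall i j, i < j < L -> d i = 2 -> d j = 2 -> exists l, i < l < j /\ d l = 0.

Lemma cg_valid_of_digits L pending d :
  (forall i, i < L -> d i <= 2) -> twos_separated d L ->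
  (pending = true -> forall j, j < L -> d j = 2 -> exists l, l < j /\ d l = 0) ->
  cg_valid pending d L.
Proof.
  revert pending d.
  induction L as [|L IH]; intros pending d Hdig Hsep Hpend; [exact I|].
  cbn [cg_valid]. split; [apply Hdig; lia|]. split.
  { intros Hp Hd0. destruct (Hpend Hp 0 ltac:(lia) Hd0) as [l [Hl _]]. lia. }
  apply IH; unfold shift.
  - intros i Hi. apply Hdig. lia.
  - intros i j Hij Hi Hj. destruct (Hsep (S i) (S j) ltac:(lia) Hi Hj) as [l [Hl Hl0]].
    exists (pred l). replace (S (pred l)) with l by lia. split; [lia|exact Hl0].
  - intros Hp j Hj Hdj.
    assert (Hl : exists l, l < S j /\ 0 < l /\ d l = 0).
    { assert (E : d 0 = 0 \/ d 0 = 1 \/ d 0 = 2) by (specialize (Hdig 0); lia).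
      destruct E as [E|[E|E]]; rewrite E in Hp; cbn in Hp.
      - discriminate.
      - destruct (Hpend Hp (S j) ltac:(lia) Hdj) as [l [Hl Hl0]].
        exists l. repeat split; [lia| |exact Hl0]. destruct l; [lia|lia].
      - destruct (Hsep 0 (S j) ltac:(lia) E Hdj) as [l [Hl Hl0]].
        exists l. repeat split; [lia|lia|exact Hl0]. }
    destruct Hl as [l [Hl [Hl1 Hl0]]].
    exists (pred l). replace (S (pred l)) with l by lia. split; [lia|exact Hl0].
Qed.

Lemma digits_of_cg_valid L pending d : cg_valid pending d L ->
  (forall i, i < L -> d i <= 2) /\ twos_separated d L /\
  (pending = true -> forall j, j < L -> d j = 2 -> exists l, l < j /\ d l = 0).
Proof.
  revert pending d.
  induction L as [|L IH]; intros pending d Hv.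
  { unfold twos_separated. split; [|split]; intros; lia. }
  destruct Hv as [Hd0 [Hp2 Hv]]. apply IH in Hv as [Hdig [Hsep Hpend]].
  unfold shift in *. split; [|split].
  - intros [|i] Hi; [exact Hd0|apply Hdig; lia].
  - intros [|i] [|j] Hij Hi Hj; try lia.
    + rewrite Hi in Hpend. destruct (Hpend eq_refl j ltac:(lia) Hj) as [l [Hl Hl0]].
      exists (S l). split; [lia|exact Hl0].
    + destruct (Hsep i j ltac:(lia) Hi Hj) as [l [Hl Hl0]].
      exists (S l). split; [lia|exact Hl0].
  - intros Hp [|j] Hj Hdj; [exfalso; exact (Hp2 Hp Hdj)|].
    assert (E : d 0 = 0 \/ d 0 = 1 \/ d 0 = 2) by lia.
    destruct E as [E|[E|E]].
    + exists 0. split; [lia|exact E].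
    + rewrite E in Hpend. destruct (Hpend Hp j ltac:(lia) Hdj) as [l [Hl Hl0]].
      exists (S l). split; [lia|exact Hl0].
    + exfalso. exact (Hp2 Hp E).
Qed.

Open Scope R_scope.

Lemma phi_sq : phi * phi = phi + 1.
Proof. unfold phi. pose proof (sqrt_sqrt 5 ltac:(lra)). nra. Qed.

Lemma phi_bounds : 3 / 2 < phi < 2.
Proof.
  unfold phi. pose proof (sqrt_sqrt 5 ltac:(lra)). pose proof (sqrt_pos 5).
  split; nra.
Qed.

Lemma two_sub_phi_phi : (2 - phi) * phi = phi - 1.
Proof. pose proof phi_sq. nra. Qed.

Lemma two_sub_phi_phi_succ : (2 - phi) * (phi + 1) = 1.
Proof. pose proof phi_sq. nra. Qed.

Definition phi_value (a b : nat) : R := INR a - phi * INR b.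

Definition value_bound (pending : bool) : R := if pending then phi else phi + 1.

Lemma phi_value_cons d0 a b :
  phi_value (d0 + 2 * a + b) (a + b) = INR d0 + (2 - phi) * phi_value a b.
Proof.
  unfold phi_value. rewrite !plus_INR, !mult_INR.
  replace ((2 - phi) * (INR a - phi * INR b))
    with (2 * INR a - phi * INR a - 2 * phi * INR b + phi * phi * INR b) by ring.
  rewrite phi_sq. simpl (INR 2). ring.
Qed.

Lemma phi_value_coords_S d L :
  phi_value (coordA d (S L)) (coordB d (S L)) =
  INR (d 0%nat) + (2 - phi) * phi_value (coordA (shift d) L) (coordB (shift d) L).
Proof. apply phi_value_cons. Qed.

Lemma phi_value_coords_nonneg d L : 0 <= phi_value (coordA d L) (coordB d L).
Proof.
  revert d. induction L as [|L IH]; intros d.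
  - unfold phi_value. simpl. lra.
  - rewrite phi_value_coords_S. pose proof phi_bounds. pose proof (pos_INR (d 0%nat)).
    pose proof (IH (shift d)). nra.
Qed.

Lemma phi_value_coords_lt_bound L pending d :
  cg_valid pending d L -> phi_value (coordA d L) (coordB d L) < value_bound pending.
Proof.
  pose proof phi_bounds. pose proof two_sub_phi_phi. pose proof two_sub_phi_phi_succ.
  revert pending d. induction L as [|L IH]; intros pending d Hv.
  - unfold phi_value, value_bound. simpl. destruct pending; lra.
  - rewrite phi_value_coords_S. destruct Hv as [Hd0 [Hp2 Hv]].
    pose proof (IH _ _ Hv) as Hlt. pose proof (phi_value_coords_nonneg (shift d) L).
    set (v := phi_value (coordA (shift d) L) (coordB (shift d) L)) in *.
    assert (Hcontr : (2 - phi) * v < (2 - phi) * value_bound (cg_next pending (d 0%nat)))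
      by (apply Rmult_lt_compat_l; lra).
    assert (E : d 0%nat = 0%nat \/ d 0%nat = 1%nat \/ d 0%nat = 2%nat) by lia.
    destruct E as [E|[E|E]]; rewrite E in *; unfold value_bound in *; cbn [cg_next INR] in *.
    + destruct pending; lra.
    + destruct pending; lra.
    + destruct pending; [exfalso; apply Hp2; reflexivity|lra].
Qed.

Lemma first_digit_pos_iff L pending d : cg_valid pending d (S L) ->
  d 0%nat <> 0%nat <-> 1 <= phi_value (coordA d (S L)) (coordB d (S L)).
Proof.
  intros [_ [_ Hv]]. pose proof phi_bounds. pose proof two_sub_phi_phi_succ.
  rewrite phi_value_coords_S. pose proof (phi_value_coords_nonneg (shift d) L).
  split.
  - intros Hd0. assert (1 <= INR (d 0%nat)) by (apply (le_INR 1); lia). nra.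
  - intros Hge Hd0. rewrite Hd0 in Hv, Hge. cbn [cg_next INR] in Hv, Hge.
    pose proof (phi_value_coords_lt_bound _ _ _ Hv) as Hlt. unfold value_bound in Hlt.
    assert ((2 - phi) * phi_value (coordA (shift d) L) (coordB (shift d) L) < (2 - phi) * (phi + 1))
      by (apply Rmult_lt_compat_l; lra).
    lra.
Qed.

(* Greedy choice of the leading digit: afterwards the remaining value
   (v - d0) / (2 - phi) is again in the admissible range. *)
Lemma choose_digit v pending : 0 <= v < value_bound pending ->
  exists d0, (d0 <= 2)%nat /\ (pending = true -> d0 <> 2%nat) /\ INR d0 <= v /\
    v - INR d0 < (2 - phi) * value_bound (cg_next pending d0).
Proof.
  intros [Hv0 Hv1]. pose proof phi_bounds. pose proof two_sub_phi_phi.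
  pose proof two_sub_phi_phi_succ. unfold value_bound in *.
  destruct (Rlt_dec v 1).
  { exists 0%nat. simpl. repeat split; try lia; lra. }
  destruct (Rlt_dec v 2).
  { exists 1%nat. simpl. repeat split; try lia; try lra. destruct pending; lra. }
  destruct pending; [lra|].
  exists 2%nat. simpl. repeat split; try lia; lra.
Qed.

Lemma peel_digit a b pending : 0 <= phi_value a b < value_bound pending ->
  exists d0 a' b', (d0 <= 2)%nat /\ (pending = true -> d0 <> 2%nat) /\
    a = (d0 + 2 * a' + b')%nat /\ b = (a' + b')%nat /\
    0 <= phi_value a' b' < value_bound (cg_next pending d0).
Proof.
  intros Hv. pose proof phi_bounds. pose proof two_sub_phi_phi. pose proof two_sub_phi_phi_succ.
  destruct (choose_digit _ _ Hv) as [d0 [Hd0 [Hp2 [Hle Hlt]]]].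
  assert (Hbound : (2 - phi) * value_bound (cg_next pending d0) <= 1)
    by (unfold value_bound; destruct (cg_next pending d0); lra).
  unfold phi_value in Hle, Hlt. pose proof (pos_INR b).
  assert (Hle' : (d0 + b <= a)%nat) by (apply INR_le; rewrite plus_INR; nra).
  assert (Hlt' : (a < d0 + 2 * b + 1)%nat).
  { apply INR_lt. rewrite !plus_INR, mult_INR. simpl (INR 2). simpl (INR 1). nra. }
  exists d0, (a - d0 - b)%nat, (2 * b + d0 - a)%nat.
  set (a' := (a - d0 - b)%nat). set (b' := (2 * b + d0 - a)%nat).
  assert (Ea : a = (d0 + 2 * a' + b')%nat) by (unfold a', b'; lia).
  assert (Eb : b = (a' + b')%nat) by (unfold a', b'; lia).
  assert (Hv' : phi_value a b = INR d0 + (2 - phi) * phi_value a' b')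
    by (rewrite Ea, Eb at 1; apply phi_value_cons).
  unfold phi_value at 1 in Hv'.
  repeat split; try assumption.
  - nra.
  - apply (Rmult_lt_reg_l (2 - phi)); lra.
Qed.

Lemma digits_of_phi_value a b pending : 0 <= phi_value a b < value_bound pending ->
  exists d L, cg_valid pending d L /\ (forall j, (L <= j)%nat -> d j = 0%nat) /\
    coordA d L = a /\ coordB d L = b.
Proof.
  remember (a + b)%nat as n eqn:En. revert a b pending En.
  induction n as [n IH] using lt_wf_ind. intros a b pending En Hv.
  destruct (Nat.eq_dec a 0) as [Ea|Ea].
  - assert (Eb : b = 0%nat).
    { subst a. unfold phi_value in Hv. simpl in Hv. destruct b as [|b]; [reflexivity|].
      pose proof phi_bounds. pose proof (pos_INR b). rewrite S_INR in Hv. nra. }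
    subst a b. exists (fun _ => 0%nat), 0%nat. repeat split; auto.
  - destruct (peel_digit _ _ _ Hv) as (d0 & a' & b' & Hd0 & Hp2 & Ea' & Eb' & Hv').
    destruct (IH (a' + b')%nat ltac:(lia) a' b' _ eq_refl Hv') as (d & L & Hval & Hz & HA & HB).
    set (dd := fun j => match j with O => d0 | S j => d j end).
    assert (Hsh : shift dd = d) by reflexivity.
    exists dd, (S L). cbn [cg_valid coordA coordB]. rewrite Hsh, HA, HB.
    repeat split; [exact Hd0|exact Hp2|exact Hval| |unfold dd; lia|unfold dd; lia].
    intros [|j] Hj; [lia|]. apply Hz. lia.
Qed.

Lemma floor_nat_eq_iff y (B : nat) : 0 <= y -> floor_nat y = B <-> INR B <= y < INR B + 1.
Proof.
  intros Hy. unfold floor_nat. destruct (base_Int_part y) as [Hlo Hhi].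
  assert (Hnn : (0 <= Int_part y)%Z) by (assert (-1 < Int_part y)%Z; [apply lt_IZR; simpl; lra|lia]).
  split.
  - intros <-. rewrite INR_IZR_INZ, Z2Nat.id by exact Hnn. lra.
  - intros [H1 H2]. rewrite INR_IZR_INZ in H1, H2.
    assert (Hlt : (Int_part y < Z.of_nat B + 1)%Z) by (apply lt_IZR; rewrite plus_IZR; simpl; lra).
    assert (Hgt : (Z.of_nat B - 1 < Int_part y)%Z) by (apply lt_IZR; rewrite minus_IZR; simpl; lra).
    replace (Int_part y) with (Z.of_nat B) by lia. apply Nat2Z.id.
Qed.

Lemma phi_value_window_iff a b :
  1 <= phi_value a b < phi + 1 <-> (1 <= a)%nat /\ b = floor_nat (INR (a - 1) / phi).
Proof.
  pose proof phi_bounds. unfold phi_value.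
  assert (Hdiv : forall x, phi * (x / phi) = x) by (intro; field; lra).
  split.
  - intros [Hlo Hhi]. assert (0 <= phi * INR b) by (pose proof (pos_INR b); nra).
    assert (Ha : (1 <= a)%nat) by (apply (INR_le 1); simpl; lra).
    split; [exact Ha|]. symmetry.
    rewrite minus_INR by exact Ha. simpl (INR 1).
    apply floor_nat_eq_iff.
    + apply Rmult_le_pos; [lra|]. left. apply Rinv_0_lt_compat. lra.
    + split; [apply (Rmult_le_reg_l phi) | apply (Rmult_lt_reg_l phi)];
        rewrite ?Hdiv; lra.
  - intros [Ha Hb].
    assert (Hy : 0 <= INR (a - 1) / phi)
      by (apply Rmult_le_pos; [apply pos_INR|left; apply Rinv_0_lt_compat; lra]).
    symmetry in Hb. apply (floor_nat_eq_iff _ _ Hy) in Hb as [Hb1 Hb2].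
    rewrite minus_INR in Hb1, Hb2 by exact Ha. simpl (INR 1) in Hb1, Hb2.
    apply (Rmult_le_compat_l phi) in Hb1; [|lra].
    apply (Rmult_lt_compat_l phi) in Hb2; [|lra].
    rewrite Hdiv in Hb1, Hb2. lra.
Qed.

Open Scope nat_scope.

Definition place (k : nat) (d : nat -> nat) : nat -> nat :=
  fun i => if k <=? i then d (i - k) else 0.

Lemma place_shift k d j : place k d (k + j) = d j.
Proof.
  unfold place. replace (k <=? k + j) with true by (symmetry; apply Nat.leb_le; lia).
  f_equal. lia.
Qed.

Lemma CG_decomp_place k d L : 1 <= k -> cg_valid false d L ->
  (forall j, L <= j -> d j = 0) -> CG_decomp (digit_sum k d L) (place k d).
Proof.
  intros Hk Hv Hz. destruct (digits_of_cg_valid L false d Hv) as [Hdig [Hsep _]].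
  assert (Hplace : forall i, place k d i = 0 \/ (k <= i /\ i - k < L /\ place k d i = d (i - k))).
  { intro i. unfold place. destruct (k <=? i) eqn:E; [|left; reflexivity].
    apply Nat.leb_le in E. destruct (Nat.lt_ge_cases (i - k) L); [right; auto|left; auto]. }
  split; [|split].
  - intros i _. destruct (Hplace i) as [->|(_ & Hi & ->)]; [lia|auto].
  - exists (k - 1 + L). split.
    + intros i Hi. unfold place. destruct (k <=? i); [apply Hz; lia|reflexivity].
    + rewrite cg_sum_split, cg_sum_eq0 by (try exact Hk; intros i Hi; unfold place;
        replace (k <=? i) with false by (symmetry; apply Nat.leb_gt; lia); reflexivity).
      apply digit_sum_ext. intro j. symmetry; apply place_shift.
  - intros i j _ Hij Hi Hj.
    destruct (Hplace i) as [E|(Hki & Hil & E)]; [congruence|].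
    destruct (Hplace j) as [E'|(Hkj & Hjl & E')]; [congruence|].
    rewrite E in Hi. rewrite E' in Hj.
    destruct (Hsep (i - k) (j - k) ltac:(lia) Hi Hj) as [l [Hl Hl0]].
    exists (k + l). split; [lia|]. rewrite place_shift. exact Hl0.
Qed.

Lemma A2k_of_digits k d L : 1 <= k -> cg_valid false d L ->
  (forall j, L <= j -> d j = 0) -> d 0 <> 0 ->
  A2k k (coordA d L * F (2 * k) + coordB d L * F (2 * k - 1)).
Proof.
  intros Hk Hv Hz Hd0. rewrite <- digit_sum_coords by exact Hk.
  destruct L as [|L]; [exfalso; apply Hd0, Hz; lia|].
  split; [|exists (place k d); split; [|split]].
  - rewrite digit_sum_coords by exact Hk. cbn [coordA].
    destruct k as [|k]; [lia|]. replace (2 * S k) with (S (2 * k + 1)) by lia.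
    pose proof (F_pos (2 * k + 1)). nia.
  - exact (CG_decomp_place k d (S L) Hk Hv Hz).
  - pose proof (place_shift k d 0) as E. rewrite Nat.add_0_r in E. rewrite E. exact Hd0.
  - intros i Hi. unfold place.
    replace (k <=? i) with false by (symmetry; apply Nat.leb_gt; lia). reflexivity.
Qed.

Lemma digits_of_A2k k m : 1 <= k -> A2k k m ->
  exists d L, cg_valid false d (S L) /\ d 0 <> 0 /\
    m = coordA d (S L) * F (2 * k) + coordB d (S L) * F (2 * k - 1).
Proof.
  intros Hk [_ [c [[Hdig [[N [HN Hsum]] Hsep]] [Hck Hbelow]]]].
  assert (HkN : k <= N) by (destruct (Nat.le_gt_cases k N); [auto|exfalso; apply Hck, HN; lia]).
  exists (fun j => c (k + j)), (N - k). split; [|split].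
  - apply cg_valid_of_digits; [| |discriminate].
    + intros i _. apply Hdig. lia.
    + intros i j Hij Hi Hj.
      destruct (Hsep (k + i) (k + j) ltac:(lia) ltac:(lia) Hi Hj) as [l [Hl Hl0]].
      exists (l - k). split; [lia|]. replace (k + (l - k)) with l by lia. exact Hl0.
  - rewrite Nat.add_0_r. exact Hck.
  - rewrite <- digit_sum_coords by exact Hk.
    replace N with (k - 1 + S (N - k)) in Hsum by lia.
    rewrite cg_sum_split, cg_sum_eq0 in Hsum by (try exact Hk; intros i Hi; apply Hbelow; lia).
    exact Hsum.
Qed.

Lemma A2k_iff_phi_value_window k m : 1 <= k ->
  A2k k m <-> exists a b, (1 <= phi_value a b < phi + 1)%R /\
                          m = a * F (2 * k) + b * F (2 * k - 1).
Proof.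
  intros Hk. split.
  - intros HA. destruct (digits_of_A2k k m Hk HA) as (d & L & Hv & Hd0 & ->).
    exists (coordA d (S L)), (coordB d (S L)). split; [|reflexivity]. split.
    + apply (first_digit_pos_iff L false d Hv). exact Hd0.
    + exact (phi_value_coords_lt_bound _ _ _ Hv).
  - intros (a & b & [Hlo Hhi] & ->).
    destruct (digits_of_phi_value a b false ltac:(unfold value_bound; lra))
      as (d & L & Hv & Hz & <- & <-).
    apply (A2k_of_digits k d L Hk Hv Hz).
    destruct L as [|L]; [unfold phi_value in Hlo; simpl in Hlo; lra|].
    apply (first_digit_pos_iff L false d Hv). exact Hlo.
Qed.

Theorem proposition4p3 :
  forall k : nat, (1 <= k)%nat ->
  forall m : nat,
    A2k k m <->
    (m = F (2 * k) \/
     exists n : nat,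
       m = ((n + 2) * F (2 * k)
            + floor_nat (INR (n + 1) / phi) * F (2 * k - 1))%nat).
Proof.
  intros k Hk m. rewrite (A2k_iff_phi_value_window k m Hk).
  assert (Hfloor0 : floor_nat (INR (1 - 1) / phi) = 0).
  { apply floor_nat_eq_iff; simpl; unfold Rdiv; rewrite Rmult_0_l; lra. }
  split.
  - intros (a & b & Hwin & ->). apply phi_value_window_iff in Hwin as [Ha ->].
    destruct (Nat.eq_dec a 1) as [->|Ha1].
    + left. rewrite Hfloor0. lia.
    + right. exists (a - 2). replace (a - 2 + 2) with a by lia.
      replace (a - 2 + 1) with (a - 1) by lia. reflexivity.
  - intros [-> | [n ->]].
    + exists 1, 0. split; [apply phi_value_window_iff; auto|lia].
    + exists (n + 2), (floor_nat (INR (n + 1) / phi)). split; [|reflexivity].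
      apply phi_value_window_iff. split; [lia|].
      replace (n + 2 - 1) with (n + 1) by lia. reflexivity.
Qed.
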